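(* Let $\mu$ be a probability measure on $\mathbb{R}^d$ and $\nu=\sum_{i=1}^M w_i\delta_{y_i}$ a discrete probability measure ($w_i>0$, $\sum_i w_i=1$), and let $c:\mathbb{R}^d\times\mathbb{R}^d\to[0,\infty)$ be a nonnegative cost. Suppose that the optimal transport problem between $\mu$ and $\nu$ with cost $c$ is well-posed, that strong duality holds, and that the semi-dual problem $\min_{\mathbf g\in\mathbb{R}^M} H(\mathbf g)$ admits a minimum. Let $K\subset\mathbb{R}^d$ be any compact set with $\mu(K)\ge 1-\frac12\min_j w_j$. Then there exists a minimizer $\mathbf g^*$ of $H$ contained in $$\mathcal C:=\{\mathbf g\in\mathbb{R}^M : |g_j|\le \|c\|_{K,\infty}\ \text{for all } j\},\qquad \|c\|_{K,\infty}:=\sup_{x\in K,\ j\in\{1,\dots,M\}}|c(x,y_j)|.$$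
   Context: For $\mathbf g=(g_1,\dots,g_M)\in\mathbb{R}^M$, the $c$-transform is $\mathbf g^c(x)=\min_{1\le i\le M}\{c(x,y_i)-g_i\}$, and the (convex) semi-dual objective is $H(\mathbf g)=\mathbb{E}_{X\sim\mu}[-\mathbf g^c(X)]-\sum_{j=1}^M w_jg_j$. Its minimum value equals minus the optimal transport cost $\min_{\pi\in\Pi(\mu,\nu)}\int c\,d\pi$ (up to the sign convention). Laguerre cells: $\mathbb L_j(\mathbf g)=\{x:\mathbf g^c(x)=c(x,y_j)-g_j\}$. *)

From HB Require Import structures.
From mathcomp Require Import all_boot all_order all_algebra.
From mathcomp Require Import all_classical all_reals all_analysis.
Set Implicit Arguments. Unset Strict Implicit. Unset Printing Implicit Defensive.
Import Order.TTheory GRing.Theory Num.Theory.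
Import numFieldNormedType.Exports.
Local Open Scope classical_set_scope.
Local Open Scope ring_scope.

(* R^d (row vectors) equipped with its Borel sigma-algebra
   (the sigma-algebra generated by the open sets of its standard topology). *)
Definition Rd (R : realType) (d : nat) : Type :=
  g_sigma_algebraType (@open 'rV[R]_d).

Section OT.
Context (R : realType) (d M : nat).
Local Notation X := (Rd R d).

Definition nu_disc (y : 'I_M -> 'rV[R]_d) (w : 'I_M -> R) (B : set X) : \bar R :=
  (\sum_(i < M) (w i)%:E * \d_(y i : X) B)%E.

Definition coupling (mu : probability X R) (y : 'I_M -> 'rV[R]_d) (w : 'I_M -> R)
  (pi : probability (X * X)%type R) : Prop :=
  (forall A : set X, measurable A -> pi (A `*` setT) = mu A) /\
  (forall B : set X, measurable B -> pi (setT `*` B) = nu_disc y w B).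

Definition transport_cost (c : 'rV[R]_d -> 'rV[R]_d -> R)
  (pi : probability (X * X)%type R) : \bar R :=
  (\int[pi]_z (c z.1 z.2)%:E)%E.

Definition OT_value (mu : probability X R) (y : 'I_M -> 'rV[R]_d) (w : 'I_M -> R)
  (c : 'rV[R]_d -> 'rV[R]_d -> R) : \bar R :=
  ereal_inf [set transport_cost c pi | pi in coupling mu y w].

(* c-transform  g^c(x) = min_i (c(x,y_i) - g_i)  (with the convention +oo for M = 0). *)
Definition ctrans (c : 'rV[R]_d -> 'rV[R]_d -> R) (y : 'I_M -> 'rV[R]_d)
  (g : 'I_M -> R) (x : X) : \bar R :=
  (\big[mine/+oo]_(i < M) (c x (y i) - g i)%:E)%E.

Definition Hsd (mu : probability X R) (y : 'I_M -> 'rV[R]_d) (w : 'I_M -> R)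
  (c : 'rV[R]_d -> 'rV[R]_d -> R) (g : 'I_M -> R) : \bar R :=
  (\int[mu]_x (- ctrans c y g x) - (\sum_(j < M) w j * g j)%:E)%E.

Definition OT_well_posed (mu : probability X R) (y : 'I_M -> 'rV[R]_d) (w : 'I_M -> R)
  (c : 'rV[R]_d -> 'rV[R]_d -> R) : Prop :=
  measurable_fun [set: (X * X)%type] (fun z : (X * X)%type => c z.1 z.2) /\
  exists pi, coupling mu y w pi /\ transport_cost c pi = OT_value mu y w c /\
             transport_cost c pi \is a fin_num.

Definition strong_duality (mu : probability X R) (y : 'I_M -> 'rV[R]_d) (w : 'I_M -> R)
  (c : 'rV[R]_d -> 'rV[R]_d -> R) : Prop :=
  ereal_inf (range (Hsd mu y w c)) = (- OT_value mu y w c)%E.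

Definition cnormK (c : 'rV[R]_d -> 'rV[R]_d -> R) (y : 'I_M -> 'rV[R]_d)
  (K : set 'rV[R]_d) : \bar R :=
  ereal_sup [set e | exists x j, K x /\ e = (`|c x (y j)|)%:E].

End OT.

From HB Require Import structures.
From mathcomp Require Import all_boot all_order all_algebra.
From mathcomp Require Import all_classical all_reals all_analysis.
From mathcomp Require Import lra measurable_realfun.
Import Order.TTheory GRing.Theory Num.Theory.
Import numFieldNormedType.Exports.
Local Open Scope classical_set_scope.
Local Open Scope ring_scope.

(* Raising the j-th potential of a minimizer g by eps > 0 raises sum_i w_i g_i by
   eps w_j, while -g^c only changes on the Laguerre cell L_j of the raised
   potential, and by at most eps there.  Minimality of H at g therefore forces
   mu(L_j) >= w_j.  As mu(K) > 1 - w_j, the cell meets K, and a point x of K in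
   it gives g_i - g_j <= c(x, y_i) - c(x, y_j) + eps <= ||c||_{K,oo} + eps.
   Since the weights sum to 1, H is invariant under subtracting a constant from
   g, so g - min_k g_k is a minimizer with entries in [0, ||c||_{K,oo}]. *)

Definition bump {V : nmodType} {M : nat} (g : 'I_M -> V) (j : 'I_M) (eps : V) :
  'I_M -> V := fun i => g i + eps *+ (i == j).

Lemma weighted_sum_bump (R : nzSemiRingType) (M : nat) (w g : 'I_M -> R) j eps :
  \sum_(i < M) w i * bump g j eps i = \sum_(i < M) w i * g i + w j * eps.
Proof.
rewrite /bump; under eq_bigr do rewrite mulrDr; rewrite big_split /=; congr (_ + _).
rewrite (bigD1 j) //= eqxx mulr1n big1 ?addr0 // => i /negbTE->.
by rewrite mulr0n mulr0.
Qed.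

Lemma weighted_sum_shift (R : nzRingType) (M : nat) (w g : 'I_M -> R) t :
  \sum_(i < M) w i = 1 -> \sum_(i < M) w i * (g i - t) = \sum_(i < M) w i * g i - t.
Proof. by move=> w1; under eq_bigr do rewrite mulrBr; rewrite sumrB -mulr_suml w1 mul1r. Qed.

Lemma abse_le_sandwich (R : realDomainType) (a b : \bar R) (e : R) : 0 <= e ->
  (a <= b)%E -> (b <= a + e%:E)%E -> (`|b| <= `|a| + e%:E)%E.
Proof.
case: a b => [a| |] [b| |] //= e0; rewrite ?leeNy_eq ?leey //.
rewrite -!EFinD !lee_fin => ab ba.
have := ler_norm a; have := ler_norm (- a); rewrite normrN => Na aN.
by rewrite ler_norml; apply/andP; split; lra.
Qed.

Section measure_facts.
Context {dT : measure_display} {T : measurableType dT} {R : realType}.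

Lemma integrable_bounded_above (mu : {finite_measure set T -> \bar R})
    (f : T -> \bar R) (B : R) :
  measurable_fun [set: T] f -> (forall x, (f x <= B%:E)%E) ->
  (\int[mu]_x f x)%E \is a fin_num -> mu.-integrable [set: T] f.
Proof.
move=> mf fB f_fin; apply/integrableP; split => //.
have B0 : 0 <= Num.max B 0 by rewrite le_max lexx orbT.
have pos_fin : (\int[mu]_x f^\+ x)%E \is a fin_num.
  rewrite ge0_fin_numE; last by apply: integral_ge0 => x _; exact: funepos_ge0.
  apply: (@le_lt_trans _ _ (\int[mu]_x (cst (Num.max B 0)%:E) x)%E).
    apply: ge0_le_integral => //; first exact: measurable_funepos.
    move=> x _; rewrite funeposE /= ge_max lee_fin B0 andbT.
    by apply: le_trans (fB x) _; rewrite lee_fin le_max lexx.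
  rewrite integral_cst // lte_mul_pinfty ?lee_fin // ltey_eq.
  by rewrite fin_num_measure.
have neg_fin : (\int[mu]_x f^\- x)%E \is a fin_num.
  by move: f_fin; rewrite integralE fin_numB => /andP[].
rewrite (_ : (fun x => `|f x|)%E = (f^\+ \+ f^\-)%E); last exact: fune_abse.
rewrite ge0_integralD //; [|exact: measurable_funepos|exact: measurable_funeneg].
by rewrite ltey_eq fin_numD pos_fin neg_fin.
Qed.

Lemma probability_setI_neq0 (P : probability T R) (A B : set T) :
  measurable A -> measurable B -> (1 < P A + P B)%E -> A `&` B !=set0.
Proof.
move=> mA mB PAB; apply/set0P/negP => /eqP AB0.
suff : (P A + P B <= 1)%E by rewrite leNgt PAB.
by rewrite -measureU // probability_le1 //; exact: measurableU.
Qed.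

End measure_facts.

Definition laguerre_cell {R : realType} {d M : nat} (c : 'rV[R]_d -> 'rV[R]_d -> R)
    (y : 'I_M -> 'rV[R]_d) (g : 'I_M -> R) (j : 'I_M) : set (Rd R d) :=
  [set x | forall i, c x (y j) - g j <= c x (y i) - g i].

Section c_transform.
Context {R : realType} {d M : nat} (y : 'I_M -> 'rV[R]_d) (c : 'rV[R]_d -> 'rV[R]_d -> R).
Local Notation X := (Rd R d).
Local Notation ct := (ctrans c y).

Lemma ctrans_le (g : 'I_M -> R) (x : X) i : (ct g x <= (c x (y i) - g i)%:E)%E.
Proof. exact: bigmin_le. Qed.

Lemma le_ctrans (g h : 'I_M -> R) (x : X) : (forall i, g i <= h i) -> (ct h x <= ct g x)%E.
Proof. by move=> gh; apply: le_bigmin2 => i _; rewrite lee_fin lerB. Qed.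

Lemma measurable_ctrans (g : 'I_M -> R) :
  measurable_fun [set: X * X] (fun z : X * X => c z.1 z.2) ->
  measurable_fun [set: X] (ct g).
Proof.
move=> mc; rewrite /ctrans; elim: (index_enum _) => [|i s IH].
  by under eq_fun do rewrite big_nil; exact: measurable_cst.
under eq_fun do rewrite big_cons /=; apply: measurable_mine => //.
apply/measurable_EFinP; apply: measurable_funB => //.
exact: (measurable_fun_pair1 (y i : X) mc).
Qed.

Lemma measurable_laguerre_cell (g : 'I_M -> R) j :
  measurable_fun [set: X * X] (fun z : X * X => c z.1 z.2) ->
  measurable (laguerre_cell c y g j).
Proof.
move=> mc; have mci i : measurable_fun [set: X] (fun x : X => c x (y i) - g i).
  by apply: measurable_funB => //; exact: (measurable_fun_pair1 (y i : X) mc).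
rewrite (_ : laguerre_cell _ _ _ _ = \bigcap_(i in [set: 'I_M])
    ([set: X] `&` [set x | c x (y j) - g j <= c x (y i) - g i])); last first.
  apply/seteqP; split => x /= cell i.
    by move=> _; split => //; exact: cell.
  by case: (cell i I).
apply: fin_bigcap_measurable => [|i _]; first exact: finite_finset.
exact: measurable_fun_le.
Qed.

Lemma ctrans_laguerre_cell {g : 'I_M -> R} {j} {x : X} :
  laguerre_cell c y g j x -> ct g x = (c x (y j) - g j)%:E.
Proof.
move=> cell; apply/eqP; rewrite eq_le ctrans_le /=.
by apply: le_bigmin => [|i _]; rewrite ?leey ?lee_fin.
Qed.

Hypothesis M_gt0 : (0 < M)%N.

Lemma ctrans_attained (g : 'I_M -> R) (x : X) : exists i, ct g x = (c x (y i) - g i)%:E.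
Proof.
have [i _ gi] := @eq_bigmin _ _ _ +oo%E (Ordinal M_gt0) predT
  (fun i => (c x (y i) - g i)%:E) isT (fun i _ => leey _).
by exists i; rewrite -gi.
Qed.

Lemma oppe_ctrans_shift (g : 'I_M -> R) (t : R) (x : X) :
  (- ct (fun i => (g i - t)%R) x = - ct g x - t%:E)%E.
Proof.
have [i gti] := ctrans_attained (fun i => g i - t) x.
have [k gk] := ctrans_attained g x.
have := ctrans_le (fun i => g i - t) x k; have := ctrans_le g x i.
rewrite gti gk !lee_fin => le_i le_k.
by rewrite -EFinN -EFinB; congr (_%:E); lra.
Qed.

Lemma oppe_ctrans_le_bigmax (g : 'I_M -> R) (x : X) : (forall x z, 0 <= c x z) ->
  (- ct g x <= (\big[Num.max/0]_i g i)%:E)%E.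
Proof.
move=> c_ge0; have [k ->] := ctrans_attained g x.
rewrite -EFinN lee_fin; apply: le_trans (le_bigmax _ _ k).
by have := c_ge0 x (y k); lra.
Qed.

Lemma oppe_ctrans_bump_le (g : 'I_M -> R) j (eps : R) (x : X) :
  (- ct (bump g j eps) x <= - ct g x
     + (eps * \1_(laguerre_cell c y (bump g j eps) j) x)%:E)%E.
Proof.
have [cell|not_cell] := pselect (laguerre_cell c y (bump g j eps) j x).
  rewrite indicE mem_set // mulr1 (ctrans_laguerre_cell cell).
  have := ctrans_le g x j; rewrite /bump eqxx mulr1n.
  case: (ct g x) => [gx| |] //=; last by rewrite addye ?leey.
  rewrite lee_fin => gxj; rewrite -EFinD lee_fin; lra.
have [l gl] := ctrans_attained (bump g j eps) x.
have := ctrans_le g x l; rewrite gl /bump.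
rewrite indicE memNset // mulr0 adde0 leeN2.
suff /negbTE -> : l != j by rewrite mulr0n addr0.
apply/eqP => lj; apply: not_cell => i; subst l.
by have := ctrans_le (bump g j eps) x i; rewrite gl lee_fin.
Qed.

End c_transform.

Section semi_dual.
Context {R : realType} {d M : nat} (mu : probability (Rd R d) R)
  (y : 'I_M -> 'rV[R]_d) (w : 'I_M -> R) (c : 'rV[R]_d -> 'rV[R]_d -> R).
Local Notation X := (Rd R d).
Local Notation H := (Hsd mu y w c).
Hypothesis c_ge0 : forall x z, 0 <= c x z.
Hypothesis c_measurable : measurable_fun [set: X * X] (fun z : X * X => c z.1 z.2).
Hypothesis M_gt0 : (0 < M)%N.

Lemma integrable_oppe_ctrans (g : 'I_M -> R) :
  H g \is a fin_num -> mu.-integrable [set: X] (fun x => - ctrans c y g x)%E.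
Proof.
move=> Hg_fin; apply: (integrable_bounded_above _ _ _ _
  (fun x => oppe_ctrans_le_bigmax y c M_gt0 g x c_ge0)).
  by apply: measurableT_comp => //; exact: measurable_ctrans.
by move: Hg_fin; rewrite fin_numB => /andP[].
Qed.

Lemma Hsd_shift (g : 'I_M -> R) (t : R) : \sum_(i < M) w i = 1 ->
  H g \is a fin_num -> H (fun i => g i - t) = H g.
Proof.
move=> w_sum Hg_fin; have intg := integrable_oppe_ctrans g Hg_fin.
rewrite /Hsd weighted_sum_shift //.
under eq_integral do rewrite oppe_ctrans_shift // -EFinN.
rewrite integralD //; last exact: finite_measure_integrable_cst.
rewrite integral_cst //.
rewrite [P in (_ * P)%E](_ : _ = 1%E) ?mule1; last exact: probability_setT.
rewrite -(fineK (integrable_fin_num measurableT intg)) -EFinD -!EFinB.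
by congr (_%:E); lra.
Qed.

Lemma minimizer_weight_le_laguerre_cell (g : 'I_M -> R) j (eps : R) :
  (forall h, (H g <= H h)%E) -> H g \is a fin_num -> 0 < eps ->
  ((w j)%:E <= mu (laguerre_cell c y (bump g j eps) j))%E.
Proof.
move=> g_min Hg_fin eps_gt0.
set S := laguerre_cell c y (bump g j eps) j.
set f := fun x => (- ctrans c y g x)%E.
set f' := fun x => (- ctrans c y (bump g j eps) x)%E.
have mS : measurable S by exact: measurable_laguerre_cell.
have int_f : mu.-integrable [set: X] f := integrable_oppe_ctrans g Hg_fin.
have int_S : mu.-integrable [set: X] (fun x => (eps * \1_S x)%:E).
  by under eq_fun do rewrite EFinM; exact: integrableZl (integrable_indic mu mS).
have f_le_f' x : (f x <= f' x)%E.
  by rewrite leeN2; apply: le_ctrans => i; rewrite /bump lerDl mulrn_wge0 // ltW.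
have f'_le x : (f' x <= f x + (eps * \1_S x)%:E)%E.
  exact: oppe_ctrans_bump_le.
have int_f' : mu.-integrable [set: X] f'.
  apply: (le_integrable measurableT _ _ (integrableD measurableT (integrable_abse int_f)
    (finite_measure_integrable_cst mu eps measurableT))).
    by apply: measurableT_comp => //; exact: measurable_ctrans.
  move=> x _; rewrite /= [leRHS]gee0_abs; last by rewrite adde_ge0 // lee_fin ltW.
  apply: abse_le_sandwich (ltW eps_gt0) (f_le_f' x) (le_trans (f'_le x) _).
  apply: leeD => //; rewrite lee_fin ler_piMr ?indicE ?lern1 ?leq_b1 //; exact: ltW.
have cell_term : (eps%:E * mu S = \int[mu]_x (eps * \1_S x)%:E)%E.
  under eq_integral do rewrite EFinM.
  by rewrite integralZl ?integral_indic ?setIT //; exact: integrable_indic.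
have gain_le : (\int[mu]_x f' x <= \int[mu]_x f x + eps%:E * mu S)%E.
  rewrite cell_term -integralD //.
  by apply: le_integral => //; exact: integrableD.
have := g_min (bump g j eps); rewrite /Hsd weighted_sum_bump -/f -/f'.
move: gain_le; rewrite -(fineK (integrable_fin_num measurableT int_f)).
rewrite -(fineK (integrable_fin_num measurableT int_f')) -(fineK (fin_num_measure mu S mS)).
rewrite -EFinM -EFinD -!EFinB !lee_fin => gain_le H_le.
by rewrite -(ler_pM2l eps_gt0) mulrC; lra.
Qed.

Lemma minimizer_gap_le_cnormK (g : 'I_M -> R) (K : set 'rV[R]_d) i j :
  (forall h, (H g <= H h)%E) -> H g \is a fin_num ->
  measurable (K : set X) -> (1 < (w j)%:E + mu K)%E ->
  ((g i - g j)%:E <= cnormK c y K)%E.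
Proof.
move=> g_min Hg_fin mK wK; apply/lee_addgt0Pr => eps eps_gt0.
have [x [cell Kx]] : laguerre_cell c y (bump g j eps) j `&` K !=set0.
  apply: probability_setI_neq0 => //; first exact: measurable_laguerre_cell.
  apply: lt_le_trans wK (leeD _ (lexx _)).
  exact: minimizer_weight_le_laguerre_cell.
have cK : ((`|c x (y i)|)%:E <= cnormK c y K)%E.
  by apply: ereal_sup_ubound; exists x, i.
apply: le_trans (leeD cK (lexx _)); rewrite -EFinD lee_fin.
have := cell i; have := c_ge0 x (y j); have := ler_norm (c x (y i)).
by rewrite /bump eqxx mulr1n; case: eqP => [->|_]; rewrite ?mulr1n ?mulr0n; lra.
Qed.

End semi_dual.

Lemma compact_Rd_measurable {R : realType} {d : nat} (K : set 'rV[R]_d) :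
  compact K -> measurable (K : set (Rd R d)).
Proof.
move=> K_compact; rewrite -(setCK K); apply: measurableC; apply: sub_sigma_algebra.
exact: closed_openC (compact_closed (@norm_hausdorff _ _) K_compact).
Qed.

Lemma Hsd_minimizer_fin_num {R : realType} {d M : nat} {mu : probability (Rd R d) R}
    {y : 'I_M -> 'rV[R]_d} {w : 'I_M -> R} {c : 'rV[R]_d -> 'rV[R]_d -> R}
    {g : 'I_M -> R} :
  OT_well_posed mu y w c -> strong_duality mu y w c ->
  (forall h, (Hsd mu y w c g <= Hsd mu y w c h)%E) -> Hsd mu y w c g \is a fin_num.
Proof.
move=> [_ [pi [_ [pi_opt pi_fin]]]] duality g_min.
suff -> : Hsd mu y w c g = ereal_inf (range (Hsd mu y w c)).
  by rewrite duality -pi_opt fin_numN.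
apply/eqP; rewrite eq_le ereal_inf_lbound; last by exists g.
by rewrite le_ereal_inf_tmp // => _ [h _ <-].
Qed.

Theorem lemma3p1 (R : realType) (d M : nat) (mu : probability (Rd R d) R)
  (y : 'I_M -> 'rV[R]_d) (w : 'I_M -> R) (c : 'rV[R]_d -> 'rV[R]_d -> R) :
  (forall j, 0 < w j) -> \sum_(j < M) w j = 1 ->
  (forall x z, 0 <= c x z) ->
  OT_well_posed mu y w c ->
  strong_duality mu y w c ->
  (exists g0 : 'I_M -> R, forall g, (Hsd mu y w c g0 <= Hsd mu y w c g)%E) ->
  forall K : set 'rV[R]_d, compact K ->
  ((1 - inf (range w) / 2)%:E <= mu K)%E ->
  exists gs : 'I_M -> R,
    (forall g, (Hsd mu y w c gs <= Hsd mu y w c g)%E) /\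
    (forall j, ((`|gs j|)%:E <= cnormK c y K)%E).
Proof.
move=> w_gt0 w_sum c_ge0 well_posed duality [g g_min] K K_compact muK.
have [M0|M_gt0] := posnP M.
  by exists g; split => // j; move: (ltn_ord j); rewrite {2}M0.
have Hg_fin := Hsd_minimizer_fin_num well_posed duality g_min.
have [c_measurable _] := well_posed.
have [k _ k_min] := @arg_minP _ _ _ (Ordinal M_gt0) xpredT g isT.
exists (fun i => g i - g k); split => [h|i].
  by rewrite Hsd_shift.
rewrite ger0_norm ?subr_ge0 ?k_min //.
apply: minimizer_gap_le_cnormK => //; first exact: compact_Rd_measurable.
apply: lt_le_trans (leeD (lexx _) muK); rewrite -EFinD lte_fin.
have : inf (range w) <= w k.
  by apply: ge_inf; [exists 0 => _ [j _ <-]; exact: ltW | exists k].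
by have := w_gt0 k; lra.
Qed.
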